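(* Let $n,m\in\mathbb Z$ and $k\ge0$. Then, in $\mathbb C_w[x,x^{-1},y,y^{-1}]$, \[ \binom{n+m}{k}_w=\sum_{j=0}^{k}\binom{n}{j}_w\Big(x^jy^{n-j}\,\binom{m}{k-j}_w\,y^{j-n}x^{-j}\Big)\prod_{i=1}^{k-j}W(i+j,n-j), \] and this is an identity in the commutative ring $\mathbb C[(w(s,t))_{s,t\in\mathbb Z}]$ (after evaluating the conjugations).
   Context: Let $(w(s,t))_{s,t\in\mathbb Z}$ be commuting invertible variables, and $\mathbb C_w[x,x^{-1},y,y^{-1}]$ the associative unital $\mathbb C$-algebra generated by $x^{\pm1},y^{\pm1}$ and the $w(s,t)^{\pm1}$ subject to $x^{-1}x=xx^{-1}=1$, $y^{-1}y=yy^{-1}=1$, $yx=w(1,1)xy$, $x\,w(s,t)=w(s+1,t)x$, $y\,w(s,t)=w(s,t+1)y$. (Consequently, for any expression $f$ in the weights, $x^jy^{n-j}fy^{j-n}x^{-j}$ is $f$ with each $w(s,t)$ replaced by $w(s+j,t+n-j)$.) Product convention: $\prod_{j=l}^m A_j=A_l\cdots A_m$ if $m>l-1$, $=1$ if $m=l-1$, $=A_{l-1}^{-1}\cdots A_{m+1}^{-1}$ if $m<l-1$. $W(s,t)=\prod_{j=1}^tw(s,j)$. $\binom nk_w$ ($n,k\in\mathbb Z$) is the unique family with $\binom n0_w=\binom nn_w=1$ for all $n$ and $\binom{n+1}{k}_w=\binom nk_w+\binom n{k-1}_wW(k,n+1-k)$ whenever $(n+1,k)\ne(0,0)$. *)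

From mathcomp Require Import all_boot all_order all_algebra.
Set Implicit Arguments. Unset Strict Implicit. Unset Printing Implicit Defensive.
Import Order.TTheory GRing.Theory Num.Theory.
Local Open Scope ring_scope.

(* Product convention over integer bounds:
   prod_{j=l}^m A_j = A_l ... A_m            if m > l-1,
                    = 1                      if m = l-1,
                    = A_{l-1}^-1 ... A_{m+1}^-1  if m < l-1.
   (The ring is commutative, so the order of factors is irrelevant.) *)
Definition iprod (R : comUnitRingType) (l m : int) (A : int -> R) : R :=
  if l - 1 <= m then \prod_(i < absz (m - l + 1)%R) A (l + (i : nat)%:Z)
  else \prod_(i < absz (l - 1 - m)%R) (A (m + 1 + (i : nat)%:Z))^-1.

Definition bigW (R : comUnitRingType) (v : int -> int -> R) (s t : int) : R :=
  iprod 1 t (fun j => v s j).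

Definition is_wbinom (R : comUnitRingType) (v : int -> int -> R)
    (b : int -> int -> R) : Prop :=
  (forall n : int, b n 0 = 1) /\
  (forall n : int, b n n = 1) /\
  (forall n k : int, (n + 1, k) <> (0, 0) ->
     b (n + 1) k = b n k + b n (k - 1) * bigW v k (n + 1 - k)).

(* Conjugation x^a y^b f y^-b x^-a = f with w(s,t) replaced by w(s+a,t+b). *)
Definition shiftw (R : Type) (v : int -> int -> R) (a b : int) : int -> int -> R :=
  fun s t => v (s + a) (t + b).

From mathcomp Require Import all_boot all_order all_algebra.
From mathcomp Require Import ring zify.
Set Implicit Arguments. Unset Strict Implicit.
Import Order.TTheory GRing.Theory Num.Theory.
Local Open Scope ring_scope.

(* Both sides satisfy, as functions of (m, k), the Pascal-type recurrence
   F (m + 1) (k + 1) = F m (k + 1) + F m k * W(k + 1, n + m - k) with F m 0 = 1: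
   for the left side this is the defining recurrence of the w-binomials, for the
   right side it follows termwise from the recurrence of the conjugated
   binomials, because the shifted weight produced there glues onto the product
   W(k + 1, n - j) into W(k + 1, n + m - k).  At m = 0 only the term j = k of the
   sum survives.  Such a recurrence determines F from the single row m = 0, in
   both directions, since it can be solved for F m (k + 1). *)

Lemma int_ind_at (P : int -> Prop) (a : int) :
  P a -> (forall t, P t -> P (t + 1)) -> (forall t, P (t + 1) -> P t) ->
  forall t, P t.
Proof.
move=> Pa up down t; rewrite -(subrK a t) addrC.
elim/int_ind: (t - a) => [|d|d]; first by rewrite addr0.
- by move=> /up; rewrite -addrA -PoszD addn1.
- have e : a + - d.+1%:Z + 1 = a + - d%:Z by lia.
  by move=> h; apply: down; rewrite e.
Qed.

Lemma int_mulrec_eq (R : unitRingType) (u f g : int -> R) (a : int) :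
  (forall t, u t \is a GRing.unit) -> f a = g a ->
  (forall t, f (t + 1) = f t * u t) -> (forall t, g (t + 1) = g t * u t) ->
  forall t, f t = g t.
Proof.
move=> hu ha hf hg; apply: (@int_ind_at (fun t => f t = g t) a ha) => t.
  by rewrite hf hg => ->.
by rewrite hf hg => /(mulIr (hu t)).
Qed.

Lemma pascal_rec_eq (R : pzRingType) (c f g : int -> nat -> R) (a : int) :
  (forall t, f t 0%N = g t 0%N) -> (forall k, f a k = g a k) ->
  (forall t k, f (t + 1) k.+1 = f t k.+1 + f t k * c t k) ->
  (forall t k, g (t + 1) k.+1 = g t k.+1 + g t k * c t k) ->
  forall t k, f t k = g t k.
Proof.
move=> h0 ha hf hg.
apply: (@int_ind_at (fun t => forall k, f t k = g t k) a ha) => t IH.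
  by case=> [|k]; rewrite ?h0 // hf hg !IH.
elim=> [|k IHk]; first exact: h0.
by apply: (addIr (f t k * c t k)); rewrite -hf IHk -hg IH.
Qed.

Section IntervalProduct.
Variable R : comUnitRingType.
Implicit Types (A : int -> R) (l m : int).

Lemma iprodE_nat l n A : iprod l (l - 1 + n%:Z) A = \prod_(i < n) A (l + i%:Z).
Proof.
rewrite /iprod ifT; last by rewrite lerDl.
by rewrite (_ : l - 1 + n%:Z - l + 1 = n%:Z); last ring.
Qed.

Lemma iprodE_neg l n A :
  iprod l (l - 1 - n.+1%:Z) A = \prod_(i < n.+1) (A (l - n.+1%:Z + i%:Z))^-1.
Proof.
rewrite /iprod ifF; last by apply/negbTE; lia.
rewrite (_ : l - 1 - (l - 1 - n.+1%:Z) = n.+1%:Z); last ring.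
by apply: eq_bigr => i _; congr (A _)^-1; ring.
Qed.

Lemma iprod_nil l A : iprod l (l - 1) A = 1.
Proof. by rewrite -[l - 1]addr0 iprodE_nat big_ord0. Qed.

Lemma iprod0 A : iprod 1 0 A = 1.
Proof. exact: iprod_nil. Qed.

Lemma iprodSr A l m : (forall i, A i \is a GRing.unit) ->
  iprod l (m + 1) A = iprod l m A * A (m + 1).
Proof.
move=> hA.
have -> : m = l - 1 + (m - (l - 1)) by rewrite addrC subrK.
case: (m - (l - 1)) => d.
  rewrite -addrA -PoszD addn1 !iprodE_nat big_ord_recr /=.
  by congr (_ * A _); lia.
rewrite NegzE; case: d => [|d].
  rewrite (_ : _ + 1 = l - 1); last ring.
  by rewrite iprod_nil iprodE_neg big_ord1 /= addr0 mulVr.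
rewrite (_ : _ + 1 = l - 1 - d.+1%:Z); last lia.
rewrite !iprodE_neg [in RHS]big_ord_recl /= mulrAC addr0.
rewrite (_ : l - d.+2%:Z = l - 1 - d.+1%:Z); last lia.
rewrite mulVr // mul1r; apply: eq_bigr => i _; congr (A _)^-1.
rewrite /bump /=; lia.
Qed.

Lemma iprod_unit A l m : (forall i, A i \is a GRing.unit) -> iprod l m A \is a GRing.unit.
Proof.
move=> hA.
move: m; apply: (@int_ind_at (fun m => iprod l m A \is a GRing.unit) (l - 1)) => [|t|t].
- by rewrite iprod_nil unitr1.
- by rewrite iprodSr // unitrM hA andbT.
- by rewrite iprodSr // unitrM => /andP[].
Qed.

Lemma iprod_shift A l m c : (forall i, A i \is a GRing.unit) ->
  iprod l m (fun i => A (i + c)) = iprod (l + c) (m + c) A.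
Proof.
move=> hA; have hAc i : A (i + c) \is a GRing.unit := hA _.
move: m; apply: (@int_mulrec_eq _ (fun t => A (t + 1 + c)) _ _ (l - 1)) => //.
- by rewrite iprod_nil (_ : l - 1 + c = l + c - 1) ?iprod_nil //; ring.
- by move=> t; rewrite iprodSr.
- by move=> t; rewrite addrAC iprodSr.
Qed.

Lemma iprod_cat A l m p : (forall i, A i \is a GRing.unit) ->
  iprod l m A * iprod (m + 1) p A = iprod l p A.
Proof.
move=> hA.
move: p; apply: (@int_mulrec_eq _ (fun t => A (t + 1)) _ _ m) => //.
- by rewrite -[X in iprod (m + 1) X](addrK 1 m) iprod_nil mulr1.
- by move=> t; rewrite iprodSr // mulrA.
- by move=> t; rewrite iprodSr.
Qed.

End IntervalProduct.

Lemma bigW_unit (R : comUnitRingType) (v : int -> int -> R) s t :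
  (forall s t, v s t \is a GRing.unit) -> bigW v s t \is a GRing.unit.
Proof. by move=> hv; apply: iprod_unit. Qed.

Lemma bigW0 (R : comUnitRingType) (v : int -> int -> R) s : bigW v s 0 = 1.
Proof. exact: iprod0. Qed.

Section WBinomial.
Variables (R : comUnitRingType) (v : int -> int -> R) (b : int -> int -> R).
Hypothesis hb : is_wbinom v b.

Lemma wbinomS t k : 0 < k -> b (t + 1) k = b t k + b t (k - 1) * bigW v k (t + 1 - k).
Proof. by move=> k_gt0; apply: hb.2.2 => -[_ k0]; rewrite k0 in k_gt0. Qed.

Lemma wbinom_eq0 (n k : nat) : (n < k)%N -> b n%:Z k%:Z = 0.
Proof.
move=> /subnKC <-; move: (k - n.+1)%N => d; elim: d n => [|d IH] n.
  have := @wbinomS n%:Z n.+1%:Z isT; rewrite addn0 -addn1 PoszD addrK subrr.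
  rewrite !hb.2.1 bigW0 mulr1 => /(congr1 (fun r => r - 1)).
  by rewrite subrr addrK.
have := @wbinomS n%:Z (n.+1 + d).+1%:Z isT.
rewrite -addn1 PoszD addrK -PoszD addn1 -addSnnS IH.
by rewrite -PoszD addn1 IH mul0r addr0.
Qed.

End WBinomial.

Section Convolution.
Variables (R : comUnitRingType) (B : (int -> int -> R) -> int -> int -> R).
Hypothesis HB : forall v : int -> int -> R,
  (forall s t, v s t \is a GRing.unit) -> is_wbinom v (B v).
Variables (w : int -> int -> R) (n : int).
Hypothesis hw : forall s t, w s t \is a GRing.unit.

Let wj (j : nat) := shiftw w j%:Z (n - j%:Z).

Let hwj j : is_wbinom (wj j) (B (wj j)).
Proof. by apply: HB => s t; apply: hw. Qed.

Let Wprod (j : nat) (r : int) := iprod 1 r (fun i => bigW w (i + j%:Z) (n - j%:Z)).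

Definition wconv (m : int) (k : nat) : R :=
  \sum_(j < k.+1) B w n j%:Z * B (wj j) m (k%:Z - j%:Z) * Wprod j (k%:Z - j%:Z).

Lemma wconv0 m : wconv m 0 = 1.
Proof. by rewrite /wconv big_ord1 subrr (hwj 0).1 (HB hw).1 /Wprod iprod0 !mulr1. Qed.

Lemma wconv_at0 k : wconv 0 k = B w n k%:Z.
Proof.
rewrite /wconv big_ord_recr /= subrr (hwj k).1 /Wprod iprod0 !mulr1 big1 ?add0r // => -[j ltjk] _.
by rewrite subzn 1?ltnW // (wbinom_eq0 (hwj j)) ?subn_gt0 // mulr0 mul0r.
Qed.

Lemma Wprod_weight_glue m (k j : nat) : (j <= k)%N ->
  bigW (wj j) (k.+1%:Z - j%:Z) (m + 1 - (k.+1%:Z - j%:Z)) * Wprod j (k.+1%:Z - j%:Z)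
  = Wprod j (k%:Z - j%:Z) * bigW w k.+1%:Z (n + m + 1 - k.+1%:Z).
Proof.
move=> le_jk; have hW i t : bigW w i t \is a GRing.unit by apply: bigW_unit.
rewrite /Wprod (_ : k.+1%:Z - j%:Z = k%:Z - j%:Z + 1); last lia.
rewrite iprodSr // mulrCA; congr (_ * _).
rewrite (_ : k%:Z - j%:Z + 1 + j%:Z = k.+1%:Z); last lia.
rewrite /bigW /wj /shiftw (_ : k%:Z - j%:Z + 1 + j%:Z = k.+1%:Z); last lia.
rewrite iprod_shift // mulrC (_ : 1 + (n - j%:Z) = n - j%:Z + 1); last ring.
rewrite (_ : _ + (n - j%:Z) = n + m + 1 - k.+1%:Z); last lia.
exact: iprod_cat.
Qed.

Lemma wconvS m k : wconv (m + 1) k.+1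
  = wconv m k.+1 + wconv m k * bigW w k.+1%:Z (n + m + 1 - k.+1%:Z).
Proof.
rewrite /wconv [LHS]big_ord_recr [X in _ = X + _]big_ord_recr /= subrr.
rewrite !(hwj k.+1).1 /Wprod iprod0 big_distrl /= addrAC; congr (_ + _).
rewrite -big_split; apply: eq_bigr => -[j /= le_jk] _.
rewrite (wbinomS (hwj j)) ?subr_gt0 ?ltz_nat //.
rewrite (_ : k.+1%:Z - j%:Z - 1 = k%:Z - j%:Z); last lia.
by rewrite mulrDr mulrDl -!mulrA Wprod_weight_glue.
Qed.

End Convolution.

Theorem corollary1 (R : comUnitRingType)
    (B : (int -> int -> R) -> int -> int -> R)
    (HB : forall v : int -> int -> R,
        (forall s t, v s t \is a GRing.unit) -> is_wbinom v (B v))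
    (w : int -> int -> R) (hw : forall s t, w s t \is a GRing.unit)
    (n m : int) (k : nat) :
  B w (n + m) k%:Z =
  \sum_(j < k.+1)
     B w n (j : nat)%:Z
     * B (shiftw w (j : nat)%:Z (n - (j : nat)%:Z)) m (k%:Z - (j : nat)%:Z)
     * iprod 1 (k%:Z - (j : nat)%:Z)
         (fun i => bigW w (i + (j : nat)%:Z) (n - (j : nat)%:Z)).
Proof.
have [b0 [_ _]] := HB w hw.
apply: (@pascal_rec_eq _ _ (fun m k => B w (n + m) k%:Z) (wconv B w n) 0).
- by move=> t; rewrite b0 wconv0.
- by move=> k'; rewrite addr0 wconv_at0.
- move=> t k'; have -> : k'%:Z = k'.+1%:Z - 1 by lia.
  by rewrite addrA (wbinomS (HB w hw)).
- by move=> t k'; rewrite wconvS.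
Qed.
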